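(* Let $s_n$ ($n\ge1$) be the number of saturated secondary structures on $[1,n]$ and $S(z)=\sum_{n\ge1}s_nz^n$. Then $S(z)$ satisfies the algebraic equation $$-S^3z^4+z(1+z)-S^2z^2(z^2-2)+S(z^2-1)=0 .$$
   Context: A secondary structure on $[1,n]$ (with minimum hairpin size $\theta=1$) is a set $S$ of pairs $(i,j)$ of integers with $1\le i<j\le n$ such that: (i) there are no $(i,j),(k,\ell)\in S$ with $i<k<j<\ell$; (ii) every position of $[1,n]$ belongs to at most one pair of $S$; (iii) $j-i>1$ for every $(i,j)\in S$. Any position may pair with any other. A secondary structure $S$ on $[1,n]$ is saturated if there is no pair $(i,j)\notin S$ with $1\le i<j\le n$ such that $S\cup\{(i,j)\}$ is again a secondary structure on $[1,n]$. *)

From HB Require Import structures.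
From mathcomp Require Import all_boot all_order all_algebra.
Set Implicit Arguments. Unset Strict Implicit. Unset Printing Implicit Defensive.
Import GRing.Theory.

(* Positions of [1,n] are represented by 'I_n.+1 (values 0..n); a pair
   (i,j) must satisfy 1 <= i < j (and j <= n is automatic). *)
Definition pos_pair (n : nat) (p : 'I_n.+1 * 'I_n.+1) : bool :=
  (1 <= p.1)%N && (p.1 < p.2)%N.

(* secondary structure on [1,n] with minimum hairpin size theta = 1 *)
Definition secondary (n : nat) (S : {set 'I_n.+1 * 'I_n.+1}) : bool :=
  [&& [forall p in S, pos_pair p],
      [forall p in S, forall q in S,
         ~~ [&& (p.1 < q.1)%N, (q.1 < p.2)%N & (p.2 < q.2)%N]],
      [forall p in S, forall q in S,
         (p != q) ==> [&& p.1 != q.1, p.1 != q.2, p.2 != q.1 & p.2 != q.2]] &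
      [forall p in S, (1 < p.2 - p.1)%N]].

Definition saturated (n : nat) (S : {set 'I_n.+1 * 'I_n.+1}) : bool :=
  secondary S &&
  [forall p, ((p \notin S) && pos_pair p) ==> ~~ secondary (p |: S)].

Definition sat_count (n : nat) : nat :=
  #|[set S : {set 'I_n.+1 * 'I_n.+1} | saturated S]|.

Definition S_trunc (N : nat) : {poly int} :=
  (\sum_(1 <= n < N.+1) (sat_count n)%:R *: 'X^n)%R.

Definition alg_lhs (P : {poly int}) : {poly int} :=
  (- P ^+ 3 * 'X^4 + 'X * (1 + 'X) - P ^+ 2 * 'X^2 * ('X^2 - 2%:R)
   + P * ('X^2 - 1))%R.

From HB Require Import structures.
From mathcomp Require Import all_boot all_order all_algebra zify ring.
From mathcomp Require Import boolp.
Set Implicit Arguments. Unset Strict Implicit. Unset Printing Implicit Defensive.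
Import GRing.Theory.

(* Saturated secondary structures are counted through a first-position
   decomposition, and the algebraic equation is then a polynomial identity.

   Structures are studied on an arbitrary window [a, a + l) of positions:
   arcs are pairs (i, k) with a <= i, i + 1 < k < a + l, and two arcs of a
   structure must be compatible (disjoint or strictly nested, no common end).
   Let s_l count saturated structures on a window of length l, and a_l those
   that are moreover "covering": every position of the window lies under an
   arc. Classifying by the first position a of the window gives
     s_l = a_(l-1) + [l > 1] a_(l-2) + sum_(1 <= j <= l-2) s_j s_(l-2-j),
     a_l = sum_(1 <= j <= l-2) s_j a_(l-2-j),
   (a unpaired: the rest is covering on [a+1, ...) or [a+2, ...); a paired
   with a + j + 1: the closing arc splits the window into two independent
   saturated parts). These counts depend only on l, as both sides satisfy the
   same recurrences. In series form S = z^2 S (1 + S) + (z + z^2) G and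
   G = 1 + z^2 S G, and eliminating G gives the equation of the theorem;
   everything is proved on the coefficients of the truncations up to z^N. *)

Section Counting.
Variable X : finType.
Implicit Types P Q : X -> Prop.

Definition number P : nat := #|[set x | `[< P x >]]|.

Lemma numberE P : number P = \sum_x `[< P x >].
Proof.
rewrite /number -sum1_card big_mkcond /=.
by apply: eq_bigr => x _; rewrite inE; case: asboolP.
Qed.

Lemma number_ext P Q : (forall x, P x <-> Q x) -> number P = number Q.
Proof. by move=> PQ; apply: eq_card => x; rewrite !inE; apply: asbool_equiv_eq. Qed.

Lemma number0 P : (forall x, ~ P x) -> number P = 0.
Proof. by move=> nP; rewrite numberE big1 // => x _; rewrite asboolF. Qed.

Lemma number1 P x0 : (forall x, P x <-> x = x0) -> number P = 1.
Proof.
move=> Px0; rewrite -(cards1 x0); apply: eq_card => x.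
by rewrite !inE; apply/asboolP/eqP => /Px0.
Qed.

Lemma number_or P Q : (forall x, P x -> ~ Q x) ->
  number (fun x => P x \/ Q x) = number P + number Q.
Proof.
move=> PnQ; rewrite !numberE -big_split; apply: eq_bigr => x _ /=.
have [hP|hP] := pselect (P x).
  by rewrite (asboolT hP) (asboolF (PnQ _ hP)) asboolT //; left.
by rewrite (asboolF hP) add0n; congr nat_of_bool; apply: asbool_equiv_eq; tauto.
Qed.

Lemma number_guard (b : bool) P : number (fun x => b /\ P x) = b * number P.
Proof.
case: b; first by rewrite mul1n; apply: number_ext => x; split=> [[]|].
by rewrite mul0n number0 // => x [].
Qed.

End Counting.

(* Positions are the values of 'I_n.+1; a window [a, a + l) is meaningful
   when a + l <= n.+1. *)
Section Windows.
Variable n : nat.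
Local Notation T := ('I_n.+1 * 'I_n.+1)%type.
Implicit Types (S : {set T}) (p q : T) (a l j x : nat).

Definition in_window a l p : bool := [&& a <= p.1, p.1.+1 < p.2 & p.2 < a + l].

Definition compatible p q : bool :=
  [|| p.2 < q.1, q.2 < p.1, (p.1 < q.1) && (q.2 < p.2) | (q.1 < p.1) && (p.2 < q.2)].

Lemma compatible_sym p q : compatible p q = compatible q p.
Proof. by rewrite /compatible; apply/idP/idP; lia. Qed.

Definition secondary_on a l S : Prop :=
  (forall p, p \in S -> in_window a l p) /\
  (forall p q, p \in S -> q \in S -> p != q -> compatible p q).

Definition addable a l S p : Prop :=
  in_window a l p /\ forall q, q \in S -> compatible p q.

Definition saturated_on a l S : Prop :=
  secondary_on a l S /\ forall p, ~ addable a l S p.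

Definition covered S x : Prop := exists2 q : T, q \in S & q.1 <= x <= q.2.

Definition covering_on a l S : Prop :=
  saturated_on a l S /\ forall x, a <= x < a + l -> covered S x.

Definition paired S x : Prop := exists2 q : T, q \in S & q.1 = x :> nat \/ q.2 = x :> nat.

Definition nsat a l : nat := number (saturated_on a l).
Definition ncov a l : nat := number (covering_on a l).

(* The arc from i to k (meaningful when i, k <= n). *)
Definition arc (i k : nat) : T := (inord i, inord k).

Lemma arc_fst i k : i <= n -> (arc i k).1 = i :> nat.
Proof. by move=> h; rewrite /= inordK. Qed.

Lemma arc_snd i k : k <= n -> (arc i k).2 = k :> nat.
Proof. by move=> h; rewrite /= inordK. Qed.

Lemma arc_eta p : arc p.1 p.2 = p.
Proof. by case: p => i k; rewrite /arc !inord_val. Qed.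

Lemma same_start a l S p q :
  secondary_on a l S -> p \in S -> q \in S -> p.1 = q.1 :> nat -> p = q.
Proof.
move=> [win comp] pS qS e; case: (eqVneq p q) => // /(comp _ _ pS qS).
by move: (win _ pS) (win _ qS); rewrite /compatible /in_window; lia.
Qed.

Lemma addable_iff a l S p : secondary_on a l S ->
  addable a l S p <-> p \notin S /\ secondary_on a l (p |: S).
Proof.
move=> [win comp]; split=> [[wp cp] | [pS [win' comp']]].
  have pS : p \notin S by apply/negP => /cp; move: wp; rewrite /in_window /compatible; lia.
  split=> //; split=> [q | q r]; rewrite !in_setU1.
    by case/orP => [/eqP-> | /win].
  case/orP => [/eqP-> | qS] /orP[/eqP-> | rS] neq.
  - by rewrite eqxx in neq.
  - exact: cp.
  - by rewrite compatible_sym; apply: cp.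
  - exact: comp.
split; first by apply: win'; rewrite setU11.
move=> q qS; apply: comp'; rewrite ?setU11 ?setU1r //.
by apply: contraNneq pS => ->.
Qed.

(* Restricting to a smaller window keeps saturation when every arc still
   fits, since an arc addable to the smaller window is addable to the larger. *)
Lemma saturated_narrow a l a' l' S :
  saturated_on a l S -> (forall p, p \in S -> in_window a' l' p) ->
  a <= a' -> a' + l' <= a + l -> saturated_on a' l' S.
Proof.
move=> [[_ comp] unadd] win' aa' la'; split=> // p [wp cp].
by apply: (unadd p); split=> //; move: wp; rewrite /in_window; lia.
Qed.

(* The first position a is either unpaired or paired with exactly one
   a + j + 1, where 1 <= j <= l - 2. *)
Lemma paired_indicator a l S : a + l <= n.+1 -> secondary_on a l S ->
  `[< ~ paired S a >] + \sum_(1 <= j < l.-1) (arc a (a + j + 1) \in S) = 1.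
Proof.
move=> al secS; have [win _] := secS.
have [[q qS qa] | unp] := pselect (paired S a); last first.
  rewrite asboolT // big1_seq // => j _; apply/eqP; rewrite eqb0; apply/negP => aS.
  apply: unp; exists (arc a (a + j + 1)) => //; left; apply: arc_fst.
  by move: (win _ aS) (ltn_ord (arc a (a + j + 1)).1); rewrite /in_window; lia.
have wq := win _ qS; rewrite /in_window in wq.
have q1 : q.1 = a :> nat by lia.
have an : a <= n by have := ltn_ord q.2; lia.
have jq : q.2 - a - 1 \in index_iota 1 l.-1 by rewrite mem_index_iota; lia.
rewrite asboolF; last by apply; exists q.
rewrite add0n (bigD1_seq _ jq (iota_uniq _ _)) /= big1_seq ?addn0.
  have -> : a + (q.2 - a - 1) + 1 = q.2 by lia.
  by rewrite -q1 arc_eta qS.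
move=> j /andP[neq]; rewrite mem_index_iota => jl.
apply/eqP; rewrite eqb0; apply: contra neq => aS; apply/eqP.
have := same_start secS aS qS; rewrite arc_fst // q1 => /(_ erefl).
by move=> /(congr1 (fun p : T => p.2 : nat)); rewrite arc_snd /=; lia.
Qed.

Lemma number_by_start a l Q : a + l <= n.+1 ->
  (forall S, Q S -> secondary_on a l S) ->
  number Q = number (fun S => Q S /\ ~ paired S a)
           + \sum_(1 <= j < l.-1) number (fun S => Q S /\ arc a (a + j + 1) \in S).
Proof.
move=> al secQ; rewrite !numberE.
under [X in _ + X]eq_bigr do rewrite numberE.
rewrite exchange_big -big_split; apply: eq_bigr => S _ /=.
under eq_bigr do rewrite asbool_and asboolb.
rewrite asbool_and; case: asboolP => [/secQ secS | _] /=.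
  by rewrite paired_indicator.
by rewrite big1.
Qed.

(* If the first position a of a saturated structure is unpaired, every position
   x >= a + 2 of the window is covered: otherwise the arc (a, x) is addable. *)
Lemma unpaired_covered a l S x : a + l <= n.+1 -> saturated_on a l S ->
  ~ paired S a -> a + 2 <= x < a + l -> covered S x.
Proof.
move=> al [[win _] unadd] unp ax.
have [//|ncov] := pselect (covered S x).
have an : a <= n by lia.
have xn : x <= n by lia.
case: (unadd (arc a x)); split.
  by rewrite /in_window arc_fst // arc_snd //; lia.
move=> q qS; have wq := win _ qS; rewrite /in_window in wq.
have qa : q.1 <> a :> nat by move=> e; apply: unp; exists q; [|left].
have qx : ~ (q.1 <= x <= q.2) by move=> h; apply: ncov; exists q.
by rewrite /compatible arc_fst // arc_snd //; lia.
Qed.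

(* A covering structure on a window starting at a + 1 or a + 2 is saturated on
   the window extended to start at a, and leaves a unpaired: an arc starting
   before the smaller window would end under an arc covering its endpoint. *)
Lemma covering_extend a l b m S : a < b <= a.+2 -> b + m = a + l ->
  covering_on b m S -> saturated_on a l S /\ ~ paired S a.
Proof.
move=> ab bm [[[win comp] unadd] cov].
split; last by move=> [q /win wq qa]; rewrite /in_window in wq; lia.
split; first by split=> // q /win; rewrite /in_window; lia.
move=> p [wp cp]; rewrite /in_window in wp.
have [pb|pb] := leqP b p.1.
  by apply: (unadd p); split=> //; rewrite /in_window; lia.
have [q qS qp] := cov p.2 ltac:(lia).
by have := cp _ qS; have := win _ qS; rewrite /compatible /in_window; lia.
Qed.

(* Hence a saturated structure with a unpaired is covering on the window
   starting at a + 1 when a + 1 is covered, and at a + 2 otherwise. *)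
Lemma saturated_unpaired a l S : 0 < l -> a + l <= n.+1 -> saturated_on a l S ->
  ~ paired S a -> covering_on a.+1 l.-1 S \/ (1 < l /\ covering_on a.+2 (l - 2) S).
Proof.
move=> l0 al satS unp; have [[win _] _] := satS.
have cov := unpaired_covered al satS unp.
have a_lt q : q \in S -> a < q.1.
  move=> qS; have wq := win _ qS; rewrite /in_window in wq.
  have : q.1 <> a :> nat by move=> e; apply: unp; exists q; [|left].
  lia.
have [cov1 | ncov1] := pselect (covered S a.+1 \/ l <= 1).
  left; split.
    apply: (saturated_narrow satS); try lia.
    by move=> q qS; have := win _ qS; have := a_lt _ qS; rewrite /in_window; lia.
  move=> x ax; case: (ltnP a.+1 x) => xa; first by apply: cov; lia.
  have -> : x = a.+1 by lia.
  by case: cov1 => // l1; exfalso; lia.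
have l2 : 1 < l by case: (leqP l 1) => // l1; case: ncov1; right.
have a2_lt q : q \in S -> a.+1 < q.1.
  move=> qS; have := a_lt _ qS; have : q.1 <> a.+1 :> nat.
    move=> e; apply: ncov1; left; exists q => //.
    by have := win _ qS; rewrite /in_window; lia.
  lia.
right; split=> //; split.
  apply: (saturated_narrow satS); try lia.
  by move=> q qS; have := win _ qS; have := a2_lt _ qS; rewrite /in_window; lia.
by move=> x ax; apply: cov; lia.
Qed.

(* Counting form: the two cases are told apart by whether a + 1 is covered. *)
Lemma number_unpaired a l : 0 < l -> a + l <= n.+1 ->
  number (fun S => saturated_on a l S /\ ~ paired S a)
  = ncov a.+1 l.-1 + (1 < l) * ncov a.+2 (l - 2).
Proof.
move=> l0 al; rewrite /ncov -number_guard -number_or.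
  apply: number_ext => S; split; first by case; apply: saturated_unpaired.
  by case=> [|[l1]]; apply: covering_extend; lia.
move=> S [_ cov] [l1 [[[win _] _] _]].
have [q qS qa] := cov a.+1 ltac:(lia).
by have := win _ qS; rewrite /in_window; lia.
Qed.

Definition restrict a l S : {set T} := S :&: finset (in_window a l).

(* Structures in which a is paired with a + j + 1: this closing arc splits the
   window into the inner window [a + 1, a + j] and the outer one [a + j + 2, a + l),
   and everything decomposes along this split. *)
Section ClosingArc.
Variables (a l j : nat) (pr : T).
Hypotheses (pr_fst : pr.1 = a :> nat) (pr_snd : pr.2 = a + j + 1 :> nat)
  (j_gt0 : 0 < j) (jl : j + 2 <= l).

Local Notation inner := (in_window a.+1 j).
Local Notation outer := (in_window (a + j + 2) (l - j - 2)).

Lemma closing_parts S q : secondary_on a l S -> pr \in S -> q \in S ->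
  [\/ q = pr, inner q | outer q].
Proof.
move=> [win comp] prS qS; case: (eqVneq q pr) => [->|neq]; first by constructor 1.
have wq := win _ qS; have cq := comp _ _ qS prS neq.
rewrite /in_window /compatible in wq cq.
have /orP[w|w] : inner q || outer q by rewrite /in_window; lia.
  by constructor 2.
by constructor 3.
Qed.

Lemma closing_decompose S : secondary_on a l S -> pr \in S ->
  S = pr |: (restrict a.+1 j S :|: restrict (a + j + 2) (l - j - 2) S).
Proof.
move=> secS prS; apply/setP => q; rewrite !inE.
case: (boolP (q \in S)) => qS /=.
  by case: (closing_parts secS prS qS) => [->|->|->]; rewrite ?eqxx ?orbT.
by rewrite !orbF; apply/esym/negbTE; apply: contraNneq qS => ->.
Qed.

Section Union.
Variables S1 S2 : {set T}.
Hypotheses (in1 : forall q, q \in S1 -> inner q) (out2 : forall q, q \in S2 -> outer q).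
Local Notation U := (pr |: (S1 :|: S2)).

Lemma union_parts q : q \in U -> [\/ q = pr, q \in S1 /\ inner q | q \in S2 /\ outer q].
Proof.
rewrite !inE => /or3P[/eqP->|qS|qS]; first by constructor 1.
  by constructor 2; split=> //; apply: in1.
by constructor 3; split=> //; apply: out2.
Qed.

Lemma restrict_union :
  restrict a.+1 j U = S1 /\ restrict (a + j + 2) (l - j - 2) U = S2.
Proof.
split; apply/setP => q; rewrite /restrict in_setI (in_set (in_window _ _)); apply/andP/idP.
- move=> [/union_parts[->|[]|[_ w]] // w']; exfalso; unfold in_window in *; lia.
- by move=> qS; split; [rewrite !inE qS orbT | exact: in1].
- move=> [/union_parts[->|[_ w]|[]] // w']; exfalso; unfold in_window in *; lia.
- by move=> qS; split; [rewrite !inE qS !orbT | exact: out2].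
Qed.

(* Arcs from different parts are always compatible. *)
Lemma union_secondary : secondary_on a l U <->
  secondary_on a.+1 j S1 /\ secondary_on (a + j + 2) (l - j - 2) S2.
Proof.
have sub1 q : q \in S1 -> q \in U by move=> qS; rewrite !inE qS orbT.
have sub2 q : q \in S2 -> q \in U by move=> qS; rewrite !inE qS !orbT.
split=> [[win comp] | [[win1 comp1] [win2 comp2]]].
  split; split.
  - exact: in1.
  - by move=> p q /sub1 pS /sub1 qS; apply: comp.
  - exact: out2.
  - by move=> p q /sub2 pS /sub2 qS; apply: comp.
split; first by move=> q /union_parts[->|[_]|[_]]; rewrite /in_window; lia.
move=> p q /union_parts[->|[pS wp]|[pS wp]] /union_parts[->|[qS wq]|[qS wq]] neq;
  rewrite ?eqxx // in neq; try by [apply: comp1 | apply: comp2].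
all: by unfold in_window, compatible in *; lia.
Qed.

(* An addable arc avoids the closing arc, hence lies in one of the windows. *)
Lemma union_addable p : addable a l U p <->
  addable a.+1 j S1 p \/ addable (a + j + 2) (l - j - 2) S2 p.
Proof.
split=> [[wp cp] | ].
  have cpr := cp _ (setU11 _ _).
  have /orP[w|w] : inner p || outer p by unfold in_window, compatible in *; lia.
    by left; split=> // q qS; apply: cp; rewrite !inE qS orbT.
  by right; split=> // q qS; apply: cp; rewrite !inE qS !orbT.
case=> [[wp cp] | [wp cp]]; (split; first by unfold in_window in *; lia);
  move=> q /union_parts[->|[qS wq]|[qS wq]]; try exact: cp;
  by unfold in_window, compatible in *; lia.
Qed.

Lemma union_saturated : saturated_on a l U <->
  saturated_on a.+1 j S1 /\ saturated_on (a + j + 2) (l - j - 2) S2.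
Proof.
split=> [[/union_secondary[sec1 sec2] unadd] | [[sec1 unadd1] [sec2 unadd2]]].
  by split; split=> // p ap; apply: (unadd p); apply/union_addable; [left | right].
split; first exact/union_secondary.
by move=> p /union_addable[]; [apply: unadd1 | apply: unadd2].
Qed.

(* The closing arc covers exactly the positions of [a, a + j + 2). *)
Lemma union_covered : (forall x, a <= x < a + l -> covered U x) <->
  (forall x, a + j + 2 <= x < a + j + 2 + (l - j - 2) -> covered S2 x).
Proof.
split=> cov x xw.
  have [q /union_parts[->|[_ wq]|[qS _]] qx] := cov x ltac:(lia).
  - by exfalso; lia.
  - by exfalso; rewrite /in_window in wq; lia.
  - by exists q.
case: (ltnP x (a + j + 2)) => xj; first by exists pr; [exact: setU11 | lia].
by have [q qS qx] := cov x ltac:(lia); exists q; rewrite // !inE qS !orbT.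
Qed.

Lemma union_covering : covering_on a l U <->
  saturated_on a.+1 j S1 /\ covering_on (a + j + 2) (l - j - 2) S2.
Proof.
rewrite /covering_on union_saturated union_covered.
by split=> [[[]]|[? []]].
Qed.

End Union.

(* Gluing the closing arc to a saturated inner structure and an outer structure
   is a bijection, inverted by restriction to the two windows. *)
Lemma number_closing (G F : {set T} -> Prop) :
  (forall S, G S -> secondary_on a l S) ->
  (forall S, F S -> forall q, q \in S -> outer q) ->
  (forall S1 S2, (forall q, q \in S1 -> inner q) -> (forall q, q \in S2 -> outer q) ->
     G (pr |: (S1 :|: S2)) <-> saturated_on a.+1 j S1 /\ F S2) ->
  number (fun S => G S /\ pr \in S) = nsat a.+1 j * number F.
Proof.
move=> secG outF splitG; rewrite /nsat /number -cardsX.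
set A := [set S1 | `[< saturated_on a.+1 j S1 >]].
set B := [set S2 | `[< F S2 >]].
have inA S1 : S1 \in A -> forall q, q \in S1 -> inner q.
  by rewrite inE => /asboolP [[win _] _].
have inB S2 : S2 \in B -> forall q, q \in S2 -> outer q by rewrite inE => /asboolP /outF.
pose glue (X : {set T} * {set T}) := pr |: (X.1 :|: X.2).
have -> : [set S | `[< G S /\ pr \in S >]] = glue @: setX A B.
  apply/setP => S; rewrite inE; apply/asboolP/imsetP => [[GS prS] | [[S1 S2]]].
    have decS := closing_decompose (secG _ GS) prS.
    have r1 q : q \in restrict a.+1 j S -> inner q by rewrite !inE => /andP[].
    have r2 q : q \in restrict (a + j + 2) (l - j - 2) S -> outer q by rewrite !inE => /andP[].
    exists (restrict a.+1 j S, restrict (a + j + 2) (l - j - 2) S) => //.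
    move: GS; rewrite {1}decS => /(splitG _ _ r1 r2) [s1 s2].
    by rewrite !inE; apply/andP; split; apply/asboolP.
  move=> /setXP[/= S1A S2B] ->; rewrite /glue /=; split; last exact: setU11.
  by apply/(splitG _ _ (inA _ S1A) (inB _ S2B)); split; apply/asboolP;
    [move: S1A | move: S2B]; rewrite inE.
apply: card_in_imset => -[S1 S2] [S1' S2'] /setXP[/= S1A S2B] /setXP[/= S1A' S2B'].
rewrite /glue /= => eq.
have [e1 e2] := restrict_union (inA _ S1A) (inB _ S2B).
have [e1' e2'] := restrict_union (inA _ S1A') (inB _ S2B').
by congr pair; [rewrite -e1 -e1' | rewrite -e2 -e2']; rewrite eq.
Qed.

End ClosingArc.

Lemma saturated_empty a S : saturated_on a 0 S <-> S = set0.
Proof.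
split=> [[[win _] _] | ->].
  by apply/setP => q; rewrite inE; apply/negbTE/negP => /win; rewrite /in_window; lia.
split; first by split=> [p|p q]; rewrite inE.
by move=> p [wp _]; move: wp; rewrite /in_window; lia.
Qed.

Lemma nsat0 a : nsat a 0 = 1.
Proof. exact/number1/saturated_empty. Qed.

Lemma ncov0 a : ncov a 0 = 1.
Proof.
apply: (@number1 _ _ set0) => S; rewrite -(saturated_empty a).
by split=> [[satS _] | satS] //; split=> // x; lia.
Qed.

(* First-position recurrence for saturated structures: a is unpaired, or
   closes an arc enclosing 1 <= j <= l - 2 positions. *)
Lemma nsat_rec a l : 0 < l -> a + l <= n.+1 ->
  nsat a l = ncov a.+1 l.-1 + (1 < l) * ncov a.+2 (l - 2)
           + \sum_(1 <= j < l.-1) nsat a.+1 j * nsat (a + j + 2) (l - j - 2).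
Proof.
move=> l0 al; have secQ S : saturated_on a l S -> secondary_on a l S by case.
rewrite {1}/nsat (number_by_start al secQ) number_unpaired //; congr (_ + _).
apply: eq_big_nat => j /andP[j0 jl].
apply: (@number_closing a l j); rewrite ?arc_fst ?arc_snd //; try lia.
  by move=> S [[win _] _].
by move=> S1 S2; apply: union_saturated; rewrite ?arc_fst ?arc_snd //; lia.
Qed.

(* In a covering structure the first position is covered, hence paired. *)
Lemma ncov_rec a l : 0 < l -> a + l <= n.+1 ->
  ncov a l = \sum_(1 <= j < l.-1) nsat a.+1 j * ncov (a + j + 2) (l - j - 2).
Proof.
move=> l0 al; have secQ S : covering_on a l S -> secondary_on a l S by case=> [[]].
rewrite {1}/ncov (number_by_start al secQ) number0 ?add0n.
  apply: eq_big_nat => j /andP[j0 jl].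
  apply: (@number_closing a l j); rewrite ?arc_fst ?arc_snd //; try lia.
    by move=> S [[[win _] _] _].
  by move=> S1 S2; apply: union_covering; rewrite ?arc_fst ?arc_snd //; lia.
move=> S [[[[win _] _] cov] unp]; have [q qS qa] := cov a ltac:(lia).
by apply: unp; exists q => //; left; have := win _ qS; rewrite /in_window; lia.
Qed.

End Windows.

(* The counts only depend on the length of the window, neither on its position
   nor on the ambient length n: both sides obey the same recurrences. *)
Lemma counts_invariant l : forall n m a b, a + l <= n.+1 -> b + l <= m.+1 ->
  nsat n a l = nsat m b l /\ ncov n a l = ncov m b l.
Proof.
elim/ltn_ind: l => -[|l] IH n m a b an bm; first by rewrite !nsat0 !ncov0.
have IHs k a' b' : k < l.+1 -> a' + k <= n.+1 -> b' + k <= m.+1 ->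
    nsat n a' k = nsat m b' k.
  by move=> kl ak bk; case: (IH k kl n m a' b' ak bk).
have IHc k a' b' : k < l.+1 -> a' + k <= n.+1 -> b' + k <= m.+1 ->
    ncov n a' k = ncov m b' k.
  by move=> kl ak bk; case: (IH k kl n m a' b' ak bk).
rewrite (nsat_rec _ an) // (nsat_rec _ bm) // (ncov_rec _ an) // (ncov_rec _ bm) //.
split; last first.
  by apply: eq_big_nat => j jl; rewrite (IHs j a.+1 b.+1) ?(IHc _ (a + j + 2) (b + j + 2)); lia.
congr (_ + _ + _); first by apply: IHc; lia.
  by case: (boolP (1 < l.+1)) => l1; rewrite ?mul0n // !mul1n; apply: IHc; lia.
by apply: eq_big_nat => j jl; rewrite (IHs j a.+1 b.+1) ?(IHs _ (a + j + 2) (b + j + 2)); lia.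
Qed.

(* s_l and a_l: the counts for the whole window [1, l] of [1, l]. *)
Definition sat_num (l : nat) : nat := nsat l 1 l.
Definition cov_num (l : nat) : nat := ncov l 1 l.

Lemma nsatE n a l : a + l <= n.+1 -> nsat n a l = sat_num l.
Proof. by move=> al; have [] := @counts_invariant l n l a 1 al (leqnn _). Qed.

Lemma ncovE n a l : a + l <= n.+1 -> ncov n a l = cov_num l.
Proof. by move=> al; have [] := @counts_invariant l n l a 1 al (leqnn _). Qed.

Lemma sat_num0 : sat_num 0 = 1. Proof. exact: nsat0. Qed.
Lemma cov_num0 : cov_num 0 = 1. Proof. exact: ncov0. Qed.

Lemma sat_num_rec l : 0 < l ->
  sat_num l = cov_num l.-1 + (1 < l) * cov_num (l - 2)
            + \sum_(1 <= j < l.-1) sat_num j * sat_num (l - 2 - j).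
Proof.
move=> l0; rewrite {1}/sat_num nsat_rec // ncovE; last lia.
congr (_ + _ + _).
  by case: (boolP (1 < l)) => l1; rewrite ?mul0n // ncovE //; lia.
by apply: eq_big_nat => j jl; rewrite subnAC !nsatE //; lia.
Qed.

Lemma cov_num_rec l : 0 < l ->
  cov_num l = \sum_(1 <= j < l.-1) sat_num j * cov_num (l - 2 - j).
Proof.
move=> l0; rewrite {1}/cov_num ncov_rec //; apply: eq_big_nat => j jl.
by rewrite subnAC nsatE ?ncovE //; lia.
Qed.

Lemma secondary_iff n (S : {set 'I_n.+1 * 'I_n.+1}) : secondary S <-> secondary_on 1 n S.
Proof.
rewrite /secondary; split.
- case/and4P => /forall_inP pos /forall_inP ncross /forall_inP dist /forall_inP hair.
  split=> [[x y] pS | [x y] [x' y'] pS qS neq].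
    have := pos _ pS; have := hair _ pS; have := ltn_ord y.
    by rewrite /pos_pair /in_window /=; lia.
  have /forall_inP/(_ _ qS) := ncross _ pS; have /forall_inP/(_ _ pS) := ncross _ qS.
  have /forall_inP/(_ _ qS)/implyP/(_ neq) := dist _ pS.
  have := pos _ pS; have := pos _ qS.
  by rewrite /pos_pair /compatible -!val_eqE /=; lia.
- move=> [win comp]; apply/and4P; split; apply/forall_inP => -[x y] pS.
  + by have := win _ pS; rewrite /in_window /pos_pair /=; lia.
  + apply/forall_inP => -[x' y'] qS; have := win _ pS; have := win _ qS.
    case: (eqVneq (x, y) (x', y')) => [[-> ->] | /(comp _ _ pS qS)];
      rewrite /in_window ?/compatible /=; lia.
  + apply/forall_inP => -[x' y'] qS; apply/implyP => /(comp _ _ pS qS).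
    have := win _ pS; have := win _ qS; rewrite /in_window /compatible -!val_eqE /=; lia.
  + by have := win _ pS; rewrite /in_window /=; lia.
Qed.

Lemma saturated_iff n (S : {set 'I_n.+1 * 'I_n.+1}) : saturated S <-> saturated_on 1 n S.
Proof.
rewrite /saturated; split.
- case/andP => /secondary_iff secS /forallP unext; split=> // p addp.
  have [pS /secondary_iff secpS] := (addable_iff p secS).1 addp.
  have /implyP := unext p; rewrite pS secpS /= => /(_ _)/negP; apply=> //.
  by have [wp _] := addp; move: wp; rewrite /in_window /pos_pair; lia.
- move=> [secS unadd]; apply/andP; split; first exact/secondary_iff.
  apply/forallP => p; apply/implyP => /andP[pS _]; apply/negP => /secondary_iff secpS.
  by apply: (unadd p); apply/(addable_iff p secS).
Qed.

Lemma sat_count_sat_num l : sat_count l = sat_num l.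
Proof. by apply: eq_card => S; rewrite !inE; apply/idP/asboolP => /saturated_iff. Qed.

Local Open Scope ring_scope.

Lemma coef_sum_monomials (R : nzRingType) (c : nat -> R) (m M k : nat) :
  (\sum_(m <= i < M) c i *: 'X^i)`_k = if (m <= k < M)%N then c k else 0.
Proof.
rewrite coef_sum; under eq_bigr do rewrite coefZ coefXn.
case: ifPn => km.
  rewrite (bigD1_seq k) ?mem_index_iota ?iota_uniq //= eqxx mulr1 big1 ?addr0 //.
  by move=> i; rewrite eq_sym => /negbTE->; rewrite mulr0.
rewrite big1_seq // => i /andP[_]; rewrite mem_index_iota => im.
by case: eqVneq km => [->|]; [rewrite im | rewrite mulr0].
Qed.

Definition cov_trunc (N : nat) : {poly int} :=
  \sum_(0 <= i < N.+1) (cov_num i)%:R *: 'X^i.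

Lemma coef_S_trunc N k : (S_trunc N)`_k = if (0 < k <= N)%N then (sat_num k)%:R else 0.
Proof.
rewrite /S_trunc (eq_bigr (fun i => (sat_num i)%:R *: 'X^i)).
  by rewrite coef_sum_monomials ltnS.
by move=> i _; rewrite sat_count_sat_num.
Qed.

Lemma coef_cov_trunc N k : (cov_trunc N)`_k = if (k <= N)%N then (cov_num k)%:R else 0.
Proof. by rewrite coef_sum_monomials ltnS. Qed.

Lemma coef_mul_low (R : nzRingType) (p q : {poly R}) (N : nat) :
  (forall k, (k <= N)%N -> p`_k = 0) -> forall k, (k <= N)%N -> (p * q)`_k = 0.
Proof.
move=> p0 k kN; rewrite coefM big1 // => i _.
by rewrite p0 ?mul0r // (leq_trans _ kN) // -ltnS.
Qed.

Lemma coef_S_trunc_mul N (F : {poly int}) (f : nat -> nat) m : (m.+2 <= N)%N ->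
  (forall i, (i <= m)%N -> F`_i = (f i)%:R) ->
  (S_trunc N * F)`_m = (\sum_(1 <= j < m.+1) sat_num j * f (m - j))%:R.
Proof.
move=> mN Ff; rewrite coefM big_ord_recl coef_S_trunc /= mul0r add0r.
rewrite (big_addn 0 m.+1 1) subn1 /= big_mkord natr_sum; apply: eq_bigr => i _.
rewrite coef_S_trunc Ff ?leq_subr // natrM /bump /= addn1 add1n.
by rewrite ifT //; have := ltn_ord i; lia.
Qed.

Lemma cov_trunc_eq N k : (k <= N)%N ->
  (cov_trunc N - (1 + 'X^2 * S_trunc N * cov_trunc N))`_k = 0.
Proof.
move=> kN; rewrite coefB coefD coef1 -mulrA coefXnM coef_cov_trunc kN.
case: k kN => [|[|m]] kN /=.
- by rewrite cov_num0 subrr.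
- by rewrite cov_num_rec // big_geq // subrr.
rewrite add0r cov_num_rec // !subSS subn0 (@coef_S_trunc_mul _ _ cov_num) ?subrr //.
by move=> i im; rewrite coef_cov_trunc ifT //; lia.
Qed.

(* The series S satisfies S = z^2 S (1 + S) + (z + z^2) G; note that the
   coefficients of 1 + S are the s_i, as s_0 = 1. *)
Lemma S_trunc_eq N k : (k <= N)%N ->
  (S_trunc N - ('X^2 * S_trunc N * (1 + S_trunc N) + ('X + 'X^2) * cov_trunc N))`_k = 0.
Proof.
move=> kN; rewrite coefB coefD -mulrA coefXnM mulrDl coefD coefXM coefXnM coef_S_trunc.
case: k kN => [|[|m]] kN /=; first by rewrite !addr0.
  by rewrite kN coef_cov_trunc sat_num_rec // big_geq // !addn0 add0r addr0 subrr.
have one_plus_S i : (i <= m)%N -> (1 + S_trunc N)`_i = (sat_num i)%:R.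
  move=> im; rewrite coefD coef1 coef_S_trunc.
  by case: i im => [|i] im /=; rewrite ?sat_num0 ?addr0 // ifT ?add0r //; lia.
rewrite kN !subSS subn0 (coef_S_trunc_mul _ one_plus_S) // !coef_cov_trunc ifT ?ifT; try lia.
by rewrite sat_num_rec // !subSS !subn0 !natrD /=; ring.
Qed.

Lemma alg_lhs_decompose (S G : {poly int}) :
  alg_lhs S = - ((S - ('X^2 * S * (1 + S) + ('X + 'X^2) * G)) * (1 - 'X^2 * S)
                 + ('X + 'X^2) * (G - (1 + 'X^2 * S * G))).
Proof. rewrite /alg_lhs; ring. Qed.

Theorem mainTheorem5 :
  forall N k : nat, (k <= N)%N -> (nth 0%R (alg_lhs (S_trunc N)) k) = 0%R.
Proof.
move=> N k kN; rewrite (alg_lhs_decompose _ (cov_trunc N)) coefN coefD.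
by rewrite (coef_mul_low _ (@S_trunc_eq N)) // mulrC (coef_mul_low _ (@cov_trunc_eq N)).
Qed.
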